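(* Fix positive reals $d_{close}<d_{min}\le d_{max}$ and $d_{open}>0$. (1) For every real $c$ with $0\le c<d_{open}$ there exist a regular run $R$ (with a single track) and reals $0\le\alpha<\beta$ with $\alpha+c<\beta-\Delta_{close}$ such that TrackStatus$(x)\ne$ incrossing over $(\alpha,\beta)$ for every track $x$, but GateStatus $\neq$ opened at some moment of $[\alpha+c,\,\beta-\Delta_{close}]$. (2) For every real $C<\Delta_{close}$ there exist a regular run $R$ (with a single track) and reals $0\le\alpha<\beta$ with $\alpha+d_{open}<\beta-C$ such that TrackStatus$(x)\ne$ incrossing over $(\alpha,\beta)$ for every track $x$, but GateStatus $\neq$ opened at some moment of $[\alpha+d_{open},\,\beta-C]$.
   Context: Setting (evolving algebra for the railroad crossing). States are structures over a vocabulary containing: a finite universe Tracks; the reals and ExtendedReals $=\mathbb{R}\cup\{\infty\}$ with standard $<$ and $+$ ($\infty$ largest); a nullary real-valued symbol $\mathrm{CT}$ (current time); positive real constants $d_{close},d_{open},d_{min},d_{max}$ with $d_{close}<d_{min}\le d_{max}$; a unary function TrackStatus from Tracks to $\{\text{empty},\text{coming},\text{incrossing}\}$; a unary function Deadline from Tracks to ExtendedReals; a nullary Dir with values in $\{\text{open},\text{close}\}$; a nullary GateStatus with values in $\{\text{opened},\text{closed}\}$. Put $W=d_{min}-d_{close}$ and $\Delta_{close}=d_{close}+(d_{max}-d_{min})=d_{max}-W$. For a track $x$, $s(x)$ is the condition [$\mathrm{TrackStatus}(x)=\text{empty}$ or $\mathrm{CT}+d_{open}<\mathrm{Deadline}(x)$],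 and SafeToOpen is $\forall x\in\mathrm{Tracks}\ s(x)$. The program has two modules (agents). Gate: simultaneously OpenGate ''if Dir=open then GateStatus:=opened'' and CloseGate ''if Dir=close then GateStatus:=closed''. Controller: simultaneously, for every track $x$, SetDeadline$(x)$ ''if TrackStatus$(x)$=coming and Deadline$(x)=\infty$ then Deadline$(x):=\mathrm{CT}+W$'', SignalClose$(x)$ ''if $\mathrm{CT}=$Deadline$(x)$ then Dir:=close'', ClearDeadline$(x)$ ''if TrackStatus$(x)$=empty and Deadline$(x)<\infty$ then Deadline$(x):=\infty$'', together with SignalOpen ''if Dir=close and SafeToOpen then Dir:=open''. Executing a module means computing all updates it generates in the current state and performing them simultaneously (nothing happens if the update set is inconsistent). A module is enabled at a state if its update set is consistent and contains an update that changes the state. TrackStatus is external (changed only by the environment); Deadline, Dir, GateStatus are internal (changed only by the modules); other symbols are static. Runs: for $t\mapsto R(t)$, $t\in[0,\infty)$, let $\rho(t)$ be the reduct of $R(t)$ without CT. $R$ is a pre-run if all $R(t)$ share a superuniverse, $\mathrm{CT}=t$ in $R(t)$, and for every $\tau>0$ there are $0=t_0<\dots<t_n=\tau$ with $\rho$ constant on each $(t_i,t_{i+1})$. For a term $e$ (free variables fixed), $e_t$ is its value in $R(t)$, $e_{t+}$ (resp. $e_{t-}$, $t>0$) its constant value on some $(t,t+\epsilon)$ (resp. $(t-\epsilon,t)$); likewise $\rho(t\pm)$. $e$ holds over an interval if it holds at each point; $e$ becomes (is set to) $a$ at $t$ if $e_{t-}\ne a=e_t$ or $e_t\neq a=e_{t+}$.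 A pre-run is a run if (i) whenever $\rho(t+)\neq\rho(t)$, $\rho(t+)$ is the CT-free reduct of the result of executing some modules at $R(t)$ (these agents fire at $t$), with external functions equal in $\rho(t)$ and $\rho(t+)$; (ii) whenever $t>0$ and $\rho(t)\ne\rho(t-)$, they differ only in external functions. An agent is immediate if it fires at every moment it is enabled; bounded if immediate or there is $b>0$ with no interval $(t,t+b)$ over which it is enabled but never fires. Initial states: TrackStatus$(x)$=empty and Deadline$(x)=\infty$ for every track $x$. A regular run is a run $R$ with $R(0)$ initial such that: (Train Motion) for each track $x$ there is a finite or infinite sequence $0=t_0<t_1<t_2<\cdots$ (the significant moments of $x$) with TrackStatus$(x)$=empty over each $[t_{3i},t_{3i+1})$, =coming over each $[t_{3i+1},t_{3i+2})$ where $d_{min}\le t_{3i+2}-t_{3i+1}\le d_{max}$, =incrossing over each $[t_{3i+2},t_{3i+3})$, and, if the sequence is finite with last element $t_k$, then $3\mid k$ and TrackStatus$(x)$=empty over $[t_k,\infty)$; (Controller Timing) Controller is immediate; (Gate Timing) Gate is bounded, there is no interval $(t,t+d_{close})$ over which Dir=close and GateStatus=opened both hold, and no interval $(t,t+d_{open})$ over which Dir=open and GateStatus=closed both hold. *)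

From Stdlib Require Import Reals Lra.
Open Scope R_scope.

Inductive TStatus := empty | coming | incrossing.
Inductive DirV := dopen_ | dclose_.
Inductive GateV := opened | closed.

Inductive ext := Fin (r : R) | Inf.

Definition ext_lt (a b : ext) : Prop :=
  match a, b with
  | Fin x, Fin y => x < y
  | Fin _, Inf => True
  | Inf, _ => False
  end.

Section Railroad.
Variable Track : Type.
Variables d_close d_open d_min d_max : R.

Definition W : R := d_min - d_close.
Definition Delta_close : R := d_close + (d_max - d_min).

(** CT-free reduct of a state (the superuniverse and static part are fixed). *)
Record State := mkState {
  TrackStatus : Track -> TStatus;
  Deadline : Track -> ext;
  Dir : DirV;
  GateStatus : GateV }.

Inductive loc := LDeadline (x : Track) | LDir | LGate.
Inductive val := VExt (e : ext) | VDir (d : DirV) | VGate (g : GateV).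

Definition get (s : State) (l : loc) : val :=
  match l with
  | LDeadline x => VExt (Deadline s x)
  | LDir => VDir (Dir s)
  | LGate => VGate (GateStatus s)
  end.

Definition updset := loc -> val -> Prop.

Definition consistent (U : updset) : Prop :=
  forall l v1 v2, U l v1 -> U l v2 -> v1 = v2.

(** [s'] is (the CT-free reduct of) the result of performing [U] at [s]:
    if [U] is inconsistent nothing happens. External TrackStatus is untouched. *)
Definition is_result (U : updset) (s s' : State) : Prop :=
  TrackStatus s' = TrackStatus s /\
  (consistent U ->
     (forall l v, U l v -> get s' l = v) /\
     (forall l, (forall v, ~ U l v) -> get s' l = get s l)) /\
  (~ consistent U -> s' = s).

Definition safe_track (s : State) (t : R) (x : Track) : Prop :=
  TrackStatus s x = empty \/ ext_lt (Fin (t + d_open)) (Deadline s x).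

Definition SafeToOpen (s : State) (t : R) : Prop :=
  forall x, safe_track s t x.

Definition gate_upd (s : State) : updset := fun l v =>
  (l = LGate /\ Dir s = dopen_ /\ v = VGate opened) \/
  (l = LGate /\ Dir s = dclose_ /\ v = VGate closed).

Definition ctrl_upd (s : State) (t : R) : updset := fun l v =>
  (exists x, l = LDeadline x /\ TrackStatus s x = coming /\ Deadline s x = Inf
             /\ v = VExt (Fin (t + W))) \/
  (exists x, l = LDir /\ Deadline s x = Fin t /\ v = VDir dclose_) \/
  (exists x, l = LDeadline x /\ TrackStatus s x = empty /\ ext_lt (Deadline s x) Inf
             /\ v = VExt Inf) \/
  (l = LDir /\ Dir s = dclose_ /\ SafeToOpen s t /\ v = VDir dopen_).

Inductive agent := Gate | Controller.

Definition agent_upd (a : agent) (s : State) (t : R) : updset :=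
  match a with Gate => gate_upd s | Controller => ctrl_upd s t end.

Definition exec_upd (S : agent -> Prop) (s : State) (t : R) : updset :=
  fun l v => exists a, S a /\ agent_upd a s t l v.

Definition enabled (a : agent) (s : State) (t : R) : Prop :=
  consistent (agent_upd a s t) /\
  exists l v, agent_upd a s t l v /\ get s l <> v.

(** Runs: [rho t] is the CT-free reduct of R(t); CT = t is implicit. *)
Definition Run := R -> State.

Definition right_val (rho : Run) (t : R) (s : State) : Prop :=
  exists eps, 0 < eps /\ forall u, t < u < t + eps -> rho u = s.

Definition left_val (rho : Run) (t : R) (s : State) : Prop :=
  exists eps, 0 < eps /\ eps <= t /\ forall u, t - eps < u < t -> rho u = s.

Definition pre_run (rho : Run) : Prop :=
  forall tau, 0 < tau ->
    exists (n : nat) (p : nat -> R),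
      p 0%nat = 0 /\ p n = tau /\
      (forall i, (i < n)%nat -> p i < p (S i)) /\
      (forall i, (i < n)%nat -> forall u1 u2,
          p i < u1 < p (S i) -> p i < u2 < p (S i) -> rho u1 = rho u2).

Definition run (rho : Run) : Prop :=
  pre_run rho /\
  (forall t s', 0 <= t -> right_val rho t s' -> s' <> rho t ->
     exists S : agent -> Prop, is_result (exec_upd S (rho t) t) (rho t) s') /\
  (forall t s', 0 < t -> left_val rho t s' -> s' <> rho t ->
     (forall x, Deadline s' x = Deadline (rho t) x) /\
     Dir s' = Dir (rho t) /\ GateStatus s' = GateStatus (rho t)).

Definition fires (rho : Run) (a : agent) (t : R) : Prop :=
  exists s', right_val rho t s' /\ s' <> rho t /\
    exists S : agent -> Prop, S a /\ is_result (exec_upd S (rho t) t) (rho t) s'.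

Definition immediate (rho : Run) (a : agent) : Prop :=
  forall t, 0 <= t -> enabled a (rho t) t -> fires rho a t.

Definition bounded (rho : Run) (a : agent) : Prop :=
  immediate rho a \/
  exists b, 0 < b /\
    ~ (exists t, 0 <= t /\
         (forall u, t < u < t + b -> enabled a (rho u) u) /\
         (forall u, t < u < t + b -> ~ fires rho a u)).

Definition initial (s : State) : Prop :=
  forall x, TrackStatus s x = empty /\ Deadline s x = Inf.

Definition ts_over (rho : Run) (x : Track) (a b : R) (st : TStatus) : Prop :=
  forall u, a <= u < b -> TrackStatus (rho u) x = st.

(** Train Motion for track x; [fin = None] : infinite sequence,
    [fin = Some k] : finite sequence t_0 < ... < t_k. *)
Definition train_motion (rho : Run) (x : Track) : Prop :=
  exists (tm : nat -> R) (fin : option nat),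
    let valid i := match fin with None => True | Some k => (i <= k)%nat end in
    tm 0%nat = 0 /\
    (forall i, valid (S i) -> tm i < tm (S i)) /\
    (forall i, valid (3 * i + 1)%nat ->
        ts_over rho x (tm (3 * i)%nat) (tm (3 * i + 1)%nat) empty) /\
    (forall i, valid (3 * i + 2)%nat ->
        ts_over rho x (tm (3 * i + 1)%nat) (tm (3 * i + 2)%nat) coming /\
        d_min <= tm (3 * i + 2)%nat - tm (3 * i + 1)%nat <= d_max) /\
    (forall i, valid (3 * i + 3)%nat ->
        ts_over rho x (tm (3 * i + 2)%nat) (tm (3 * i + 3)%nat) incrossing) /\
    (forall k, fin = Some k ->
        (exists m, k = (3 * m)%nat) /\
        forall u, tm k <= u -> TrackStatus (rho u) x = empty).

Definition regular_run (rho : Run) : Prop :=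
  run rho /\ initial (rho 0) /\
  (forall x, train_motion rho x) /\
  immediate rho Controller /\
  bounded rho Gate /\
  ~ (exists t, 0 <= t /\ forall u, t < u < t + d_close ->
        Dir (rho u) = dclose_ /\ GateStatus (rho u) = opened) /\
  ~ (exists t, 0 <= t /\ forall u, t < u < t + d_open ->
        Dir (rho u) = dopen_ /\ GateStatus (rho u) = closed).

End Railroad.

From Pilot Require Import Defs.
From Stdlib Require Import Reals Lra Lia List.
Open Scope R_scope.

(* Both parts are witnessed by one run with a single train whose approach takes
   the full time d_max.  The controller's deadline, set when the train starts
   coming, then expires Delta_close before the train enters the crossing, and
   the gate may close any lag e < d_close after that, so it is already closed
   Delta_close - e before the train enters.  After the train leaves, the
   controller reopens at once, but the gate may lag by any h < d_open.  Both lags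
   are legal in a regular run, so neither d_open nor Delta_close can be
   shortened in the liveness property. *)

Section OneSidedValues.
Variables (T : Type) (rho : Run T).

Lemma right_val_const t a s :
  t < a -> (forall u, t < u < a -> rho u = s) -> right_val T rho t s.
Proof. intros Ha Hs. exists (a - t). split; [lra|]. intros u Hu. apply Hs; lra. Qed.

Lemma right_val_unique t s1 s2 :
  right_val T rho t s1 -> right_val T rho t s2 -> s1 = s2.
Proof.
  intros [e1 [He1 H1]] [e2 [He2 H2]].
  pose proof (Rmin_l e1 e2); pose proof (Rmin_r e1 e2).
  assert (0 < Rmin e1 e2) by (apply Rmin_glb_lt; lra).
  rewrite <- (H1 (t + Rmin e1 e2 / 2)), <- (H2 (t + Rmin e1 e2 / 2)) by lra; reflexivity.
Qed.

Lemma left_val_const t a s :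
  0 <= a < t -> (forall u, a < u < t -> rho u = s) -> left_val T rho t s.
Proof. intros Ha Hs. exists (t - a). repeat split; try lra. intros u Hu. apply Hs; lra. Qed.

Lemma left_val_unique t s1 s2 :
  left_val T rho t s1 -> left_val T rho t s2 -> s1 = s2.
Proof.
  intros [e1 [He1 [_ H1]]] [e2 [He2 [_ H2]]].
  pose proof (Rmin_l e1 e2); pose proof (Rmin_r e1 e2).
  assert (0 < Rmin e1 e2) by (apply Rmin_glb_lt; lra).
  rewrite <- (H1 (t - Rmin e1 e2 / 2)), <- (H2 (t - Rmin e1 e2 / 2)) by lra; reflexivity.
Qed.

Definition partitioned (tau : R) : Prop :=
  exists (n : nat) (p : nat -> R),
    p 0%nat = 0 /\ p n = tau /\
    (forall i, (i < n)%nat -> p i < p (S i)) /\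
    (forall i, (i < n)%nat -> forall u1 u2,
        p i < u1 < p (S i) -> p i < u2 < p (S i) -> rho u1 = rho u2).

Definition const_on (a b : R) : Prop :=
  forall u1 u2, a < u1 < b -> a < u2 < b -> rho u1 = rho u2.

Lemma partitioned0 : partitioned 0.
Proof. exists 0%nat, (fun _ => 0). repeat split; intros; lia. Qed.

Lemma partitioned_extend a b :
  partitioned a -> a < b -> const_on a b -> partitioned b.
Proof.
  intros [n [p [H0 [Hn [Hinc Hconst]]]]] Hab Hc.
  exists (S n), (fun i => if Nat.leb i n then p i else b).
  assert (Hle : forall i, (i <= n)%nat -> Nat.leb i n = true)
    by (intros; apply Nat.leb_le; lia).
  assert (Hgt : Nat.leb (S n) n = false) by (apply Nat.leb_gt; lia).
  rewrite Hle, Hgt by lia. repeat split; auto.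
  - intros i Hi. destruct (Nat.eq_dec i n) as [->|Hne].
    + rewrite Hle, Hgt by lia. lra.
    + rewrite !Hle by lia. apply Hinc; lia.
  - intros i Hi u1 u2. destruct (Nat.eq_dec i n) as [->|Hne].
    + rewrite Hle, Hgt, Hn by lia. apply Hc.
    + rewrite !Hle by lia. apply Hconst; lia.
Qed.

Fixpoint const_pieces (a : R) (l : list R) : Prop :=
  match l with
  | nil => forall b, a < b -> const_on a b
  | b :: l' => a < b /\ const_on a b /\ const_pieces b l'
  end.

Lemma partitioned_const_pieces l : forall a,
  partitioned a -> const_pieces a l -> forall b, a < b -> partitioned b.
Proof.
  induction l as [|c l IH]; simpl; intros a Ha Hl b Hab.
  - apply (partitioned_extend a); auto.
  - destruct Hl as [Hac [Hc Hl]].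
    destruct (Rle_lt_dec b c).
    + apply (partitioned_extend a); auto. intros u1 u2 ? ?. apply Hc; lra.
    + apply (IH c); auto. apply (partitioned_extend a); auto.
Qed.

Lemma pre_run_const_pieces l : const_pieces 0 l -> pre_run T rho.
Proof. intros Hl tau Htau. exact (partitioned_const_pieces l 0 partitioned0 Hl tau Htau). Qed.

End OneSidedValues.

Lemma is_result_graph (T : Type) (U : updset T) s s' (f : loc T -> option val) :
  (forall l v, U l v <-> f l = Some v) ->
  TrackStatus T s' = TrackStatus T s ->
  (forall l v, f l = Some v -> get T s' l = v) ->
  (forall l, f l = None -> get T s' l = get T s l) ->
  is_result T U s s'.
Proof.
  intros HU HT Hset Hkeep.
  assert (Hc : consistent T U).
  { intros l v1 v2 h1 h2. apply HU in h1. apply HU in h2. congruence. }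
  split; [exact HT|]. split.
  - intros _. split.
    + intros l v h. apply Hset, HU, h.
    + intros l hn. apply Hkeep. destruct (f l) eqn:E; auto.
      exfalso. apply (hn v), HU, E.
  - intros hc. contradiction.
Qed.

Section SingleAgentSteps.
Variables (T : Type) (d_close d_open d_min : R).

Lemma exec_upd_single (a : agent) s t l v :
  exec_upd T d_close d_open d_min (eq a) s t l v <-> agent_upd T d_close d_open d_min a s t l v.
Proof. split; [intros [b [<- H]]; exact H | intros H; exists a; auto]. Qed.

Lemma fires_single_step (rho : Run T) (a : agent) t s' b :
  t < b -> (forall u, t < u < b -> rho u = s') -> s' <> rho t ->
  is_result T (exec_upd T d_close d_open d_min (eq a) (rho t) t) (rho t) s' ->
  fires T d_close d_open d_min rho a t.
Proof.
  intros Hb Hs Hne Hres. exists s'.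
  split; [exact (right_val_const T rho t b s' Hb Hs)|].
  split; [exact Hne|]. exists (eq a). auto.
Qed.

End SingleAgentSteps.

Lemma no_long_interval (P : R -> Prop) a b L :
  a <= b -> b - a < L -> (forall u, P u -> a < u <= b) ->
  ~ (exists t, 0 <= t /\ forall u, t < u < t + L -> P u).
Proof.
  intros Hab HL HP [t [_ Ht]].
  assert (H1 := HP _ (Ht (t + (L - (b - a)) / 4) ltac:(lra))).
  assert (H2 := HP _ (Ht (t + L - (L - (b - a)) / 4) ltac:(lra))).
  lra.
Qed.

Section OneTrainRun.
Variables d_close d_open d_min d_max : R.
Variables t_coming lag_close lag_open : R.
Hypothesis close_lt_min : d_close < d_min.
Hypothesis min_le_max : d_min <= d_max.
Hypothesis coming_pos : 0 < t_coming.
Hypothesis lag_close_bounds : 0 < lag_close < d_close.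
Hypothesis lag_open_bounds : 0 < lag_open < d_open.

Definition t_deadline := t_coming + W d_close d_min.
Definition t_closed := t_deadline + lag_close.
Definition t_enter := t_coming + d_max.
Definition t_leave := t_enter + 1.
Definition t_opened := t_leave + lag_open.

Lemma times_increasing :
  0 < t_coming /\ t_coming < t_deadline /\ t_deadline < t_closed /\
  t_closed < t_enter /\ t_enter < t_leave /\ t_leave < t_opened.
Proof. unfold t_opened, t_leave, t_enter, t_closed, t_deadline, W. lra. Qed.

Ltac times := pose proof times_increasing as [? [? [? [? [? ?]]]]].

Definition one_track_state ts dl d g := mkState unit (fun _ => ts) (fun _ => dl) d g.

Lemma one_track_state_inj ts dl d g ts' dl' d' g' :
  one_track_state ts dl d g = one_track_state ts' dl' d' g' -> dl = dl' /\ d = d' /\ g = g'.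
Proof.
  intros E. apply (f_equal (fun s => (Deadline unit s tt, Dir unit s, GateStatus unit s))) in E.
  injection E. auto.
Qed.

Definition idle := one_track_state empty Inf dopen_ opened.
Definition approach := one_track_state coming Inf dopen_ opened.
Definition armed := one_track_state coming (Fin t_deadline) dopen_ opened.
Definition signalled := one_track_state coming (Fin t_deadline) dclose_ opened.
Definition lowered := one_track_state coming (Fin t_deadline) dclose_ closed.
Definition crossing := one_track_state incrossing (Fin t_deadline) dclose_ closed.
Definition vacated := one_track_state empty (Fin t_deadline) dclose_ closed.
Definition reopening := one_track_state empty Inf dopen_ closed.

Definition railrun : Run unit := fun u =>
  if Rlt_dec u t_coming then idle
  else if Rle_dec u t_coming then approach
  else if Rle_dec u t_deadline then armed
  else if Rle_dec u t_closed then signalled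
  else if Rlt_dec u t_enter then lowered
  else if Rlt_dec u t_leave then crossing
  else if Rle_dec u t_leave then vacated
  else if Rle_dec u t_opened then reopening
  else idle.

Ltac railrun_cases := intros; times; unfold railrun;
  repeat match goal with
  | |- context [Rlt_dec ?a ?b] => destruct (Rlt_dec a b)
  | |- context [Rle_dec ?a ?b] => destruct (Rle_dec a b) end;
  first [reflexivity | exfalso; lra].

Lemma railrun_idle u : u < t_coming \/ t_opened < u -> railrun u = idle.
Proof. railrun_cases. Qed.
Lemma railrun_approach u : u = t_coming -> railrun u = approach.
Proof. railrun_cases. Qed.
Lemma railrun_armed u : t_coming < u <= t_deadline -> railrun u = armed.
Proof. railrun_cases. Qed.
Lemma railrun_signalled u : t_deadline < u <= t_closed -> railrun u = signalled.
Proof. railrun_cases. Qed.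
Lemma railrun_lowered u : t_closed < u < t_enter -> railrun u = lowered.
Proof. railrun_cases. Qed.
Lemma railrun_crossing u : t_enter <= u < t_leave -> railrun u = crossing.
Proof. railrun_cases. Qed.
Lemma railrun_vacated u : u = t_leave -> railrun u = vacated.
Proof. railrun_cases. Qed.
Lemma railrun_reopening u : t_leave < u <= t_opened -> railrun u = reopening.
Proof. railrun_cases. Qed.

Ltac rewrite_railrun u :=
  first [ rewrite (railrun_idle u) in * by lra
        | rewrite (railrun_approach u) in * by lra
        | rewrite (railrun_armed u) in * by lra
        | rewrite (railrun_signalled u) in * by lra
        | rewrite (railrun_lowered u) in * by lra
        | rewrite (railrun_crossing u) in * by lra
        | rewrite (railrun_vacated u) in * by lra
        | rewrite (railrun_reopening u) in * by lra ].

Lemma time_regions t :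
  t < t_coming \/ t = t_coming \/ t_coming < t < t_deadline \/ t = t_deadline \/
  t_deadline < t < t_closed \/ t = t_closed \/ t_closed < t < t_enter \/ t = t_enter \/
  t_enter < t < t_leave \/ t = t_leave \/ t_leave < t < t_opened \/ t = t_opened \/
  t_opened < t.
Proof.
  times.
  destruct (total_order_T t t_coming) as [[|]|]; [tauto|tauto|do 2 right].
  destruct (total_order_T t t_deadline) as [[|]|]; [left; lra|tauto|do 2 right].
  destruct (total_order_T t t_closed) as [[|]|]; [left; lra|tauto|do 2 right].
  destruct (total_order_T t t_enter) as [[|]|]; [left; lra|tauto|do 2 right].
  destruct (total_order_T t t_leave) as [[|]|]; [left; lra|tauto|do 2 right].
  destruct (total_order_T t t_opened) as [[|]|]; [left; lra|tauto|do 2 right; auto].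
Qed.

Ltac by_regions t := times;
  destruct (time_regions t) as [?|[?|[?|[?|[?|[?|[?|[?|[?|[?|[?|[?|?]]]]]]]]]]]].

Lemma railrun_pre_run : pre_run unit railrun.
Proof.
  times. apply (pre_run_const_pieces _ _
    (t_coming :: t_deadline :: t_closed :: t_enter :: t_leave :: t_opened :: nil)).
  simpl; unfold const_on; repeat split; try lra; intros;
    match goal with |- railrun ?u1 = railrun ?u2 =>
      rewrite_railrun u1; rewrite_railrun u2; reflexivity end.
Qed.

Ltac pick_jump :=
  first [ split; [lra|reflexivity]
        | left; split; [lra|reflexivity]
        | right; pick_jump ].

(* Tried with [b] running through the breakpoints in increasing order, the
   first [b] beyond [t] bounds an interval on which [railrun] is constant. *)
Ltac value_from Hlim t b :=
  let m := constr:((t + b) / 2) in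
  let Hv := fresh in
  assert (Hv := Hlim b (railrun m) ltac:(lra)
    ltac:(let u := fresh in intros u ?; rewrite_railrun u; rewrite_railrun m; reflexivity));
  rewrite_railrun m.

Lemma railrun_right_jump t s' :
  right_val unit railrun t s' -> s' <> railrun t ->
  (t = t_coming /\ s' = armed) \/ (t = t_deadline /\ s' = signalled) \/
  (t = t_closed /\ s' = lowered) \/ (t = t_leave /\ s' = reopening) \/
  (t = t_opened /\ s' = idle).
Proof.
  intros Hs Hne.
  assert (Hlim : forall b st, t < b -> (forall u, t < u < b -> railrun u = st) -> s' = st)
    by (intros b st Hb Hst; exact (right_val_unique _ _ _ _ _ Hs (right_val_const _ _ _ _ _ Hb Hst))).
  by_regions t;
    first [ value_from Hlim t t_coming | value_from Hlim t t_deadline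
          | value_from Hlim t t_closed | value_from Hlim t t_enter
          | value_from Hlim t t_leave | value_from Hlim t t_opened
          | value_from Hlim t (t + 1) ];
    subst s'; rewrite_railrun t; first [ exfalso; apply Hne; reflexivity | pick_jump ].
Qed.

Ltac value_from_left Hlim t a :=
  let m := constr:((a + t) / 2) in
  let Hv := fresh in
  assert (Hv := Hlim a (railrun m) ltac:(lra)
    ltac:(let u := fresh in intros u ?; rewrite_railrun u; rewrite_railrun m; reflexivity));
  rewrite_railrun m.

Lemma railrun_left_jump t s' : 0 < t ->
  left_val unit railrun t s' -> s' <> railrun t ->
  (t = t_coming /\ s' = idle) \/ (t = t_enter /\ s' = lowered) \/
  (t = t_leave /\ s' = crossing).
Proof.
  intros Ht Hs Hne.
  assert (Hlim : forall a st, 0 <= a < t -> (forall u, a < u < t -> railrun u = st) -> s' = st)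
    by (intros a st Ha Hst; exact (left_val_unique _ _ _ _ _ Hs (left_val_const _ _ _ _ _ Ha Hst))).
  by_regions t;
    first [ value_from_left Hlim t t_opened | value_from_left Hlim t t_leave
          | value_from_left Hlim t t_enter | value_from_left Hlim t t_closed
          | value_from_left Hlim t t_deadline | value_from_left Hlim t t_coming
          | value_from_left Hlim t 0 ];
    subst s'; rewrite_railrun t; first [ exfalso; apply Hne; reflexivity | pick_jump ].
Qed.

Notation step a s t s' :=
  (is_result unit (exec_upd unit d_close d_open d_min (eq a) s t) s s').

Lemma set_deadline_step : step Controller approach t_coming armed.
Proof.
  apply is_result_graph with
    (f := fun l => match l with LDeadline _ _ => Some (VExt (Fin t_deadline)) | _ => None end);
    [intros l v; rewrite exec_upd_single; split | reflexivity | |].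
  - intros [[x [-> [_ [_ ->]]]]|[[x [_ [Hd _]]]|[[x [_ [Hd _]]]|[_ [Hd _]]]]];
      try discriminate. reflexivity.
  - destruct l as [x| |]; try discriminate. intros Hq. injection Hq as <-.
    left. exists x. auto.
  - intros [x| |] v Hq; try discriminate. injection Hq as <-. reflexivity.
  - intros [x| |] Hq; try discriminate; reflexivity.
Qed.

Lemma signal_close_step : step Controller armed t_deadline signalled.
Proof.
  apply is_result_graph with
    (f := fun l => match l with LDir _ => Some (VDir dclose_) | _ => None end);
    [intros l v; rewrite exec_upd_single; split | reflexivity | |].
  - intros [[x [-> [_ [Hd _]]]]|[[x [-> [_ ->]]]|[[x [_ [Hd _]]]|[_ [Hd _]]]]];
      try discriminate. reflexivity.
  - destruct l as [x| |]; try discriminate. intros Hq. injection Hq as <-.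
    right; left. exists tt. auto.
  - intros [x| |] v Hq; try discriminate. injection Hq as <-. reflexivity.
  - intros [x| |] Hq; try discriminate; reflexivity.
Qed.

Lemma clear_and_open_step : step Controller vacated t_leave reopening.
Proof.
  times.
  apply is_result_graph with
    (f := fun l => match l with LDir _ => Some (VDir dopen_)
                              | LDeadline _ _ => Some (VExt Inf) | _ => None end);
    [intros l v; rewrite exec_upd_single; split | reflexivity | |].
  - intros [[x [-> [Hd _]]]|[[x [-> [Hd _]]]|[[x [-> [_ [_ ->]]]]|[-> [_ [_ ->]]]]]];
      try discriminate; try reflexivity.
    injection Hd. lra.
  - destruct l as [x| |]; try discriminate; intros Hq; injection Hq as <-.
    + right; right; left. exists x. simpl. auto.
    + right; right; right. simpl. repeat split; auto. intro y. left. reflexivity.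
  - intros [x| |] v Hq; try discriminate; injection Hq as <-; reflexivity.
  - intros [x| |] Hq; try discriminate; reflexivity.
Qed.

Lemma lower_gate_step : step Gate signalled t_closed lowered.
Proof.
  apply is_result_graph with
    (f := fun l => match l with LGate _ => Some (VGate closed) | _ => None end);
    [intros l v; rewrite exec_upd_single; split | reflexivity | |].
  - intros [[-> [Hd _]]|[-> [_ ->]]]; try discriminate. reflexivity.
  - destruct l as [x| |]; try discriminate. intros Hq. injection Hq as <-. right. auto.
  - intros [x| |] v Hq; try discriminate. injection Hq as <-. reflexivity.
  - intros [x| |] Hq; try discriminate; reflexivity.
Qed.

Lemma raise_gate_step : step Gate reopening t_opened idle.
Proof.
  apply is_result_graph with
    (f := fun l => match l with LGate _ => Some (VGate opened) | _ => None end);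
    [intros l v; rewrite exec_upd_single; split | reflexivity | |].
  - intros [[-> [_ ->]]|[-> [Hd _]]]; try discriminate. reflexivity.
  - destruct l as [x| |]; try discriminate. intros Hq. injection Hq as <-. left. auto.
  - intros [x| |] v Hq; try discriminate. injection Hq as <-. reflexivity.
  - intros [x| |] Hq; try discriminate; reflexivity.
Qed.

Lemma railrun_run : run unit d_close d_open d_min railrun.
Proof.
  split; [exact railrun_pre_run|]. split.
  - intros t s' _ Hs Hne. times.
    destruct (railrun_right_jump t s' Hs Hne)
      as [[Ht ->]|[[Ht ->]|[[Ht ->]|[[Ht ->]|[Ht ->]]]]]; rewrite_railrun t; subst t.
    + exists (eq Controller). exact set_deadline_step.
    + exists (eq Controller). exact signal_close_step.
    + exists (eq Gate). exact lower_gate_step.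
    + exists (eq Controller). exact clear_and_open_step.
    + exists (eq Gate). exact raise_gate_step.
  - intros t s' Ht Hs Hne. times.
    destruct (railrun_left_jump t s' Ht Hs Hne) as [[Ht' ->]|[[Ht' ->]|[Ht' ->]]];
      rewrite_railrun t; repeat split.
Qed.

Lemma ctrl_quiet_no_deadline g t l v :
  ~ ctrl_upd unit d_close d_open d_min (one_track_state empty Inf dopen_ g) t l v.
Proof.
  intros [[x [_ [Hd _]]]|[[x [_ [Hd _]]]|[[x [_ [_ [Hd _]]]]|[_ [Hd _]]]]];
    try discriminate; contradiction.
Qed.

Lemma ctrl_quiet_pending ts d g t l v :
  ts <> empty -> t <> t_deadline -> d = dopen_ \/ t_deadline < t ->
  ~ ctrl_upd unit d_close d_open d_min (one_track_state ts (Fin t_deadline) d g) t l v.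
Proof.
  intros Hts Ht Hd [[x [_ [_ [Hq _]]]]|[[x [_ [Hq _]]]|[[x [_ [Hq _]]]|[_ [Hq [Hsafe _]]]]]].
  - discriminate.
  - injection Hq. auto.
  - contradiction.
  - destruct (Hsafe tt) as [Hx|Hx]; [contradiction|].
    destruct Hd as [->|Hd]; [discriminate|]. simpl in Hx. lra.
Qed.

Lemma railrun_ctrl_quiet t l v :
  t <> t_coming -> t <> t_deadline -> t <> t_leave ->
  ~ ctrl_upd unit d_close d_open d_min (railrun t) t l v.
Proof.
  intros Hcoming Hdeadline Hleave. by_regions t; first [exfalso; congruence | rewrite_railrun t];
    first [ apply ctrl_quiet_no_deadline
          | apply ctrl_quiet_pending; [discriminate | lra | first [left; reflexivity | right; lra]] ].
Qed.

Ltac states_differ :=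
  let E := fresh in intro E; apply one_track_state_inj in E as [? [? ?]]; discriminate.

Lemma railrun_controller_immediate : immediate unit d_close d_open d_min railrun Controller.
Proof.
  intros t _ [_ [l [v [Hupd _]]]]. times.
  destruct (Req_dec t t_coming) as [->|Hcoming].
  { apply (fires_single_step _ _ _ _ _ _ _ armed t_deadline); [lra| |rewrite_railrun t_coming..].
    - intros u Hu. rewrite_railrun u. reflexivity.
    - states_differ.
    - exact set_deadline_step. }
  destruct (Req_dec t t_deadline) as [->|Hdeadline].
  { apply (fires_single_step _ _ _ _ _ _ _ signalled t_closed); [lra| |rewrite_railrun t_deadline..].
    - intros u Hu. rewrite_railrun u. reflexivity.
    - states_differ.
    - exact signal_close_step. }
  destruct (Req_dec t t_leave) as [->|Hleave].
  { apply (fires_single_step _ _ _ _ _ _ _ reopening t_opened); [lra| |rewrite_railrun t_leave..].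
    - intros u Hu. rewrite_railrun u. reflexivity.
    - states_differ.
    - exact clear_and_open_step. }
  exfalso. exact (railrun_ctrl_quiet t l v Hcoming Hdeadline Hleave Hupd).
Qed.

(* After [t_opened] the gate is never enabled again. *)
Lemma railrun_gate_bounded : Defs.bounded unit d_close d_open d_min railrun Gate.
Proof.
  right. times. exists (t_opened + 1). split; [lra|].
  intros [t [Ht [Hen _]]].
  destruct (Hen (t + t_opened + 1 / 2) ltac:(lra)) as [_ [l [v [Hupd Hchange]]]].
  rewrite_railrun (t + t_opened + 1 / 2).
  destruct Hupd as [[-> [_ ->]]|[-> [Hd _]]]; [apply Hchange; reflexivity | discriminate].
Qed.

Lemma railrun_close_pending u :
  Dir unit (railrun u) = dclose_ -> GateStatus unit (railrun u) = opened ->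
  t_deadline < u <= t_closed.
Proof.
  intros Hdir Hgate. by_regions u; rewrite_railrun u; simpl in Hdir, Hgate; try discriminate; lra.
Qed.

Lemma railrun_open_pending u :
  Dir unit (railrun u) = dopen_ -> GateStatus unit (railrun u) = closed ->
  t_leave < u <= t_opened.
Proof.
  intros Hdir Hgate. by_regions u; rewrite_railrun u; simpl in Hdir, Hgate; try discriminate; lra.
Qed.

Lemma railrun_track_status u :
  (u < t_coming -> TrackStatus unit (railrun u) tt = empty) /\
  (t_coming <= u < t_enter -> TrackStatus unit (railrun u) tt = coming) /\
  (t_enter <= u < t_leave -> TrackStatus unit (railrun u) tt = incrossing) /\
  (t_leave <= u -> TrackStatus unit (railrun u) tt = empty).
Proof.
  by_regions u; rewrite_railrun u; repeat split; intros; first [reflexivity | lra].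
Qed.

Definition significant_moment (i : nat) : R :=
  match i with 0%nat => 0 | 1%nat => t_coming | 2%nat => t_enter | _ => t_leave end.

Ltac track_status u :=
  let Hpre := fresh in let Happ := fresh in let Hcross := fresh in let Hpost := fresh in
  destruct (railrun_track_status u) as [Hpre [Happ [Hcross Hpost]]];
  first [apply Hpre; lra | apply Happ; lra | apply Hcross; lra | apply Hpost; lra].

Lemma railrun_train_motion x : train_motion unit d_min d_max railrun x.
Proof.
  destruct x. exists significant_moment, (Some 3%nat). cbv zeta. times.
  split; [reflexivity|].
  split; [intros [|[|[|i]]] Hi; simpl; lia || lra|].
  split; [intros [|i] Hi; [intros u Hu; simpl in Hu; track_status u | lia]|].
  split; [intros [|i] Hi; [split; [intros u Hu; simpl in Hu; track_status u
                                   | simpl; unfold t_enter; lra] | lia]|].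
  split; [intros [|i] Hi; [intros u Hu; simpl in Hu; track_status u | lia]|].
  intros k Hk. injection Hk as <-. split; [exists 1%nat; reflexivity|].
  intros u Hu. simpl in Hu. track_status u.
Qed.

Lemma railrun_regular : regular_run unit d_close d_open d_min d_max railrun.
Proof.
  times. split; [exact railrun_run|].
  split; [intros x; rewrite_railrun 0; split; reflexivity|].
  split; [exact railrun_train_motion|].
  split; [exact railrun_controller_immediate|].
  split; [exact railrun_gate_bounded|].
  split.
  - apply (no_long_interval (fun u => Dir unit (railrun u) = dclose_ /\
                                      GateStatus unit (railrun u) = opened)
             t_deadline t_closed); [lra | unfold t_closed; lra |].
    intros u [Hdir Hgate]. exact (railrun_close_pending u Hdir Hgate).
  - apply (no_long_interval (fun u => Dir unit (railrun u) = dopen_ /\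
                                      GateStatus unit (railrun u) = closed)
             t_leave t_opened); [lra | unfold t_opened; lra |].
    intros u [Hdir Hgate]. exact (railrun_open_pending u Hdir Hgate).
Qed.

Lemma railrun_gate_closed u :
  t_closed < u <= t_opened -> GateStatus unit (railrun u) = closed.
Proof. intros Hu. by_regions u; rewrite_railrun u; first [reflexivity | lra]. Qed.

Lemma railrun_not_incrossing u x :
  u < t_enter \/ t_leave <= u -> TrackStatus unit (railrun u) x <> incrossing.
Proof. intros Hu. by_regions u; rewrite_railrun u; first [discriminate | lra]. Qed.

End OneTrainRun.
Definition liveness_fails (rho : Run unit) (a b : R) : Prop :=
  exists alpha beta,
    0 <= alpha < beta /\ alpha + a < beta - b /\
    (forall x u, alpha < u < beta -> TrackStatus unit (rho u) x <> incrossing) /\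
    exists u, alpha + a <= u <= beta - b /\ GateStatus unit (rho u) <> opened.

(* The interval starts when the train leaves; the gate is still closed c later. *)
Lemma d_open_sharp d_close d_open d_min d_max c :
  0 < d_close -> d_close < d_min -> d_min <= d_max -> 0 <= c < d_open ->
  exists rho, regular_run unit d_close d_open d_min d_max rho /\
              liveness_fails rho c (Delta_close d_close d_min d_max).
Proof.
  intros Hdc Hcm Hmm Hc.
  assert (Hclose : 0 < d_close / 2 < d_close) by lra.
  assert (Hopen : 0 < (c + d_open) / 2 < d_open) by lra.
  pose proof (times_increasing _ _ _ _ _ _ _ Hcm Hmm Rlt_0_1 Hclose Hopen) as Ht.
  exists (railrun d_close d_min d_max 1 (d_close / 2) ((c + d_open) / 2)).
  split; [exact (railrun_regular _ _ _ _ _ _ _ Hcm Hmm Rlt_0_1 Hclose Hopen)|].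
  exists (t_leave d_max 1), (t_leave d_max 1 + c + Delta_close d_close d_min d_max + 1).
  unfold Delta_close; repeat split; try (unfold t_leave, t_enter; lra).
  - intros x u Hu. apply (railrun_not_incrossing _ _ _ _ _ _ _ Hcm Hmm Rlt_0_1 Hclose Hopen).
    right; lra.
  - exists (t_leave d_max 1 + c). split; [lra|].
    rewrite (railrun_gate_closed _ _ _ _ _ _ _ Hcm Hmm Rlt_0_1 Hclose Hopen); [discriminate|].
    unfold t_opened in *. lra.
Qed.

(* The interval ends when the train enters; the gate has been closed for almost
   Delta_close by then. *)
Lemma Delta_close_sharp d_close d_open d_min d_max C :
  0 < d_close -> d_close < d_min -> d_min <= d_max -> 0 < d_open ->
  C < Delta_close d_close d_min d_max ->
  exists rho, regular_run unit d_close d_open d_min d_max rho /\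
              liveness_fails rho d_open C.
Proof.
  intros Hdc Hcm Hmm Hdo HC. unfold Delta_close in HC.
  set (M := Rmax C 0).
  assert (HM0 : C <= M /\ 0 <= M) by (split; [apply Rmax_l | apply Rmax_r]).
  set (m := Rmin d_close (Delta_close d_close d_min d_max - C)).
  assert (Hm : 0 < m <= d_close /\ m <= Delta_close d_close d_min d_max - C).
  { unfold m, Delta_close. repeat split; [apply Rmin_glb_lt | apply Rmin_l | apply Rmin_r]; lra. }
  set (e := m / 2).
  assert (Hclose : 0 < e < d_close) by (unfold e; lra).
  assert (HM : M < Delta_close d_close d_min d_max - e)
    by (unfold M, e, Delta_close in *; apply Rmax_lub_lt; lra).
  assert (Hopen : 0 < d_open / 2 < d_open) by lra.
  assert (Hcoming : 0 < M + d_open + 1) by lra.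
  pose proof (times_increasing _ _ _ _ _ _ _ Hcm Hmm Hcoming Hclose Hopen) as Ht.
  exists (railrun d_close d_min d_max (M + d_open + 1) e (d_open / 2)).
  split; [exact (railrun_regular _ _ _ _ _ _ _ Hcm Hmm Hcoming Hclose Hopen)|].
  exists (t_enter d_max (M + d_open + 1) - M - d_open - 1), (t_enter d_max (M + d_open + 1)).
  repeat split; try (unfold t_enter; lra).
  - intros x u Hu. apply (railrun_not_incrossing _ _ _ _ _ _ _ Hcm Hmm Hcoming Hclose Hopen).
    left; lra.
  - exists (t_enter d_max (M + d_open + 1) - M). split; [lra|].
    rewrite (railrun_gate_closed _ _ _ _ _ _ _ Hcm Hmm Hcoming Hclose Hopen); [discriminate|].
    unfold t_closed, t_deadline, t_enter, Delta_close, W in *. lra.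
Qed.

Theorem mainTheorem11 :
  forall d_close d_open d_min d_max : R,
    0 < d_close -> d_close < d_min -> d_min <= d_max -> 0 < d_open ->
    (* (1) *)
    (forall c, 0 <= c < d_open ->
       exists rho : Run unit,
         regular_run unit d_close d_open d_min d_max rho /\
         exists alpha beta,
           0 <= alpha < beta /\
           alpha + c < beta - Delta_close d_close d_min d_max /\
           (forall x u, alpha < u < beta -> TrackStatus unit (rho u) x <> incrossing) /\
           exists u, alpha + c <= u <= beta - Delta_close d_close d_min d_max /\
                     GateStatus unit (rho u) <> opened) /\
    (* (2) *)
    (forall C, C < Delta_close d_close d_min d_max ->
       exists rho : Run unit,
         regular_run unit d_close d_open d_min d_max rho /\
         exists alpha beta,
           0 <= alpha < beta /\
           alpha + d_open < beta - C /\
           (forall x u, alpha < u < beta -> TrackStatus unit (rho u) x <> incrossing) /\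
           exists u, alpha + d_open <= u <= beta - C /\
                     GateStatus unit (rho u) <> opened).
Proof.
  intros d_close d_open d_min d_max Hdc Hcm Hmm Hdo. split.
  - intros c Hc. exact (d_open_sharp d_close d_open d_min d_max c Hdc Hcm Hmm Hc).
  - intros C HC. exact (Delta_close_sharp d_close d_open d_min d_max C Hdc Hcm Hmm Hdo HC).
Qed.
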